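(* Let $D=(N,A)$, $\mathcal{K}$, $\{D^k\}_{k\in\mathcal{K}}$ be an instance of SND-RR with time horizon $T$, let $\mathcal{A}$ be a valid arc partition and $G=G(D,\mathcal{A})$ the auxiliary flat network. Then the integer programs SND-RR$(D_T)$ and SND-RR$(G_T)$ have the same number of variables and the same number of constraints, and they are equivalent: there is a bijection between their feasible solutions preserving the objective value.
   Context: An instance of SND-RR consists of: a directed graph $D=(N,A)$; for each arc $vw\in A$ a transit time $\tau_{vw}\in\mathbb{Z}_{>0}$, fixed cost $f_{vw}>0$, capacity $u_{vw}\in\mathbb{Z}_{>0}$, and per-unit cost $c^k_{vw}>0$ for each commodity $k$; a set $\mathcal{K}$ of commodities, each with origin $o_k$, destination $d_k$, demand $q_k$, release time $r_k$, deadline $l_k$ (integers, earliest release $0$); and subgraphs $D^k=(N^k,A^k)\subseteq D$. Standing assumption: $\delta^+_{D^k}(d_k)=\emptyset$ and $\delta^+_{D^k}(v)\ne\emptyset$ for $v\in N^k\setminus\{d_k\}$. $T=\max_kl_k$, $[T]=\{0,\dots,T\}$. For any flat graph $H$ with transit times, its time-expanded network $H_T$ has timed nodes $(v,t)$, $t\in[T]$, movement arcs $((v,t),(w,t+\tau_{vw}))$ for arcs $vw$ of $H$ with $t+\tau_{vw}\le T$, and holdover arcs $((v,t),(v,t+1))$. $D_T=(N_T,A_T\cup H_T)$, $D^k_T=(N^k_T,A^k_T\cup H^k_T)$. For a timed arc $a=((v,t),(w,t'))$, $u_a=u_{vw}$, $f_a=f_{vw}$, $c^k_a=c^k_{vw}$;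 $x^k(S)=\sum_{a\in S}x^k_a$; $\delta^\pm$ denote outgoing/incoming timed arcs. SND-RR$(D_T)$: minimize $\sum_{a\in A_T}f_ay_a+\sum_{a\in A_T}\sum_kc^k_aq_kx^k_a$ s.t. for all $k$, $(v,t)\in N^k_T$: $x^k(\delta^+_{D^k_T}(v,t))-x^k(\delta^-_{D^k_T}(v,t))$ is $1$ at $(o_k,r_k)$, $-1$ at $(d_k,l_k)$, $0$ otherwise; $\sum_kq_kx^k_a\le u_ay_a$ for $a\in A_T$; $x^k_a\in\{0,1\}$ for $a\in A^k_T\cup H^k_T$; $y_a\in\mathbb{Z}_{\ge0}$ for $a\in A_T$. Valid partition: $\mathcal{A}=\{\mathcal{A}_v\}_{v\in N}$ with each $\mathcal{A}_v$ a partition of $\delta^+_D(v)$ such that for each $k$, $\delta^+_{D^k}(v)\subseteq A_i$ for some $A_i\in\mathcal{A}_v$. Auxiliary network $G=(V,E)$: $\mathcal{V}(v)=\{v^0,\dots,v^{|\mathcal{A}_v|}\}$ (copy $v^i$ per part $A_i$, terminal copy $v^0$), $V=\bigcup_v\mathcal{V}(v)$, $E=\{v^iw^j: vw\in A_i\in\mathcal{A}_v, w^j\in\mathcal{V}(w)\}$; each $v^iw^j$ gets the transit time and costs of $vw$. With $\mathcal{K}(A_i)=\{k:\emptyset\ne\delta^+_{D^k}(v)\subseteq A_i\}$ for $A_i\in\mathcal{A}_v$: $G^k=(V^k,E^k)$, $V^k=\{v^i:v\in N^k,A_i\in\mathcal{A}_v,k\in\mathcal{K}(A_i)\}\cup\{d^0_k\}$,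 $E^k=\{v^iw^j:vw\in A^k,v^i,w^j\in V^k\}$; $o'_k$ denotes the unique copy of $o_k$ in $V^k$. $G_T=(V_T,E_T\cup F_T)$ and $G^k_T=(V^k_T,E^k_T\cup F^k_T)$ are the time-expanded networks. For $a=((v,t),(w,t'))\in A_T$, $\mathcal{E}_T(a)=\{((v^i,t),(w^j,t')): vw\in A_i\in\mathcal{A}_v, w^j\in\mathcal{V}(w)\}$. SND-RR$(G_T)$: minimize $\sum_{a\in A_T}f_ay_a+\sum_k\sum_{e\in E_T}c^k_eq_kx^k_e$ s.t. for all $k$, $(v,t)\in V^k_T$: $x^k(\delta^+_{G^k_T}(v,t))-x^k(\delta^-_{G^k_T}(v,t))$ is $1$ at $(o'_k,r_k)$, $-1$ at $(d^0_k,l_k)$, $0$ otherwise; $\sum_k\sum_{e\in\mathcal{E}_T(a)}q_kx^k_e\le u_ay_a$ for all $a\in A_T$; $x^k_e\in\{0,1\}$ for $e\in E^k_T\cup F^k_T$; $y_a\in\mathbb{Z}_{\ge0}$ for $a\in A_T$. *)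

From HB Require Import structures.
From mathcomp Require Import all_boot all_order all_algebra.
Set Implicit Arguments. Unset Strict Implicit. Unset Printing Implicit Defensive.
Import Order.TTheory GRing.Theory Num.Theory.

Section TimeExpansion.
Variables (X : finType) (Tm : nat).

Definition tnode := (X * 'I_Tm.+1)%type.
Definition tarc := (tnode * tnode)%type.

Definition tnodes (S : {set X}) : {set tnode} := [set p : tnode | p.1 \in S].

Definition movarcs (tau : X -> X -> nat) (E : {set X * X}) : {set tarc} :=
  [set a : tarc | ((a.1.1, a.2.1) \in E) && (a.1.2 + tau a.1.1 a.2.1 == a.2.2)%N].

Definition holdarcs (S : {set X}) : {set tarc} :=
  [set a : tarc | [&& a.1.1 \in S, a.2.1 == a.1.1 & (a.1.2).+1 == a.2.2]].

Definition outarcs (B : {set tarc}) (p : tnode) : {set tarc} := [set a in B | a.1 == p].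
Definition inarcs (B : {set tarc}) (p : tnode) : {set tarc} := [set a in B | a.2 == p].

Definition is_tnode (p : tnode) (v : X) (t : nat) : bool := (p.1 == v) && (p.2 == t :> nat).
End TimeExpansion.

Record instance (R : realFieldType) (N K : finType) := Instance {
  arcs : {set N * N};
  tau  : N -> N -> nat;
  fc   : N -> N -> R;
  cap  : N -> N -> nat;
  uc   : K -> N -> N -> R;
  orig : K -> N;
  dest : K -> N;
  dem  : K -> R;
  rel  : K -> nat;
  ddl  : K -> nat;
  Nk   : K -> {set N};
  Ak   : K -> {set N * N};
  no_loop : forall a, a \in arcs -> a.1 != a.2;
  tau_pos : forall a, a \in arcs -> (0 < tau a.1 a.2)%N;
  fc_pos  : forall a, a \in arcs -> (0 < fc a.1 a.2)%R;
  cap_pos : forall a, a \in arcs -> (0 < cap a.1 a.2)%N;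
  uc_pos  : forall k a, a \in arcs -> (0 < uc k a.1 a.2)%R;
  dem_pos : forall k, (0 < dem k)%R;
  rel0    : exists k, rel k = 0%N;
  Ak_sub  : forall k, Ak k \subset arcs;
  Ak_ends : forall k a, a \in Ak k -> (a.1 \in Nk k) && (a.2 \in Nk k);
  orig_in : forall k, orig k \in Nk k;
  dest_in : forall k, dest k \in Nk k;
  dest_out : forall k, [set a in Ak k | a.1 == dest k] = set0;
  other_out : forall k v, v \in Nk k -> v != dest k -> [set a in Ak k | a.1 == v] != set0
}.

Section SND.
Variables (R : realFieldType) (N K : finType) (I : instance R N K).

Definition horizon : nat := (\max_(k : K) ddl I k)%N.

Local Notation T := horizon.
Definition tarcN := tarc N T.
Definition tnodeN := tnode N T.

Definition outk (k : K) (v : N) : {set N * N} := [set a in Ak I k | a.1 == v].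

Definition AT : {set tarcN} := movarcs T (tau I) (arcs I).
Definition AkT (k : K) : {set tarcN} := movarcs T (tau I) (Ak I k).
Definition HkT (k : K) : {set tarcN} := holdarcs T (Nk I k).
Definition arcsDkT (k : K) : {set tarcN} := AkT k :|: HkT k.
Definition NkT (k : K) : {set tnodeN} := tnodes T (Nk I k).

(* a candidate solution: y_a (a in A_T, nonneg. integer), x^k_a (binary);
   entries outside the variable index sets are required to be 0 *)
Definition solD := ({ffun tarcN -> nat} * {ffun K * tarcN -> bool})%type.

Definition feasD (s : solD) : Prop :=
  let y := s.1 in let x := s.2 in
  [/\ (forall a, a \notin AT -> y a = 0%N),
      (forall k a, a \notin arcsDkT k -> x (k, a) = false),
      (forall k p, p \in NkT k ->
         ((\sum_(a in outarcs (arcsDkT k) p) (x (k, a) : nat))%:Z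
          - (\sum_(a in inarcs (arcsDkT k) p) (x (k, a) : nat))%:Z)%R
         = ((is_tnode p (orig I k) (rel I k))%:Z - (is_tnode p (dest I k) (ddl I k))%:Z)%R)
    & (forall a, a \in AT ->
         (\sum_(k : K) dem I k * (x (k, a) : nat)%:R <= (cap I a.1.1 a.2.1 * y a)%:R)%R)].

Definition objD (s : solD) : R :=
  ((\sum_(a in AT) fc I a.1.1 a.2.1 * (s.1 a)%:R)
   + \sum_(a in AT) \sum_(k : K) uc I k a.1.1 a.2.1 * dem I k * (s.2 (k, a) : nat)%:R)%R.

Definition nvarsD : nat := (#|AT| + \sum_(k : K) #|arcsDkT k|)%N.
Definition nconsD : nat := (\sum_(k : K) #|NkT k| + #|AT|)%N.

(* A_v is given as a set of parts (blocks) of delta^+_D(v) *)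
Definition valid_partition (P : N -> {set {set N * N}}) : Prop :=
  forall v, partition (P v) [set a in arcs I | a.1 == v] /\
    forall k, outk k v != set0 -> exists2 B, B \in P v & outk k v \subset B.

Variable P : N -> {set {set N * N}}.

(* copies of nodes: (v, None) is the terminal copy v^0,
   (v, Some B) is the copy v^i for the part B = A_i of A_v *)
Definition cnode := (N * option {set N * N})%type.

Definition Vall : {set cnode} :=
  [set c : cnode | if c.2 is Some B then B \in P c.1 else true].

Definition Kpart (v : N) (B : {set N * N}) : {set K} :=
  [set k | (outk k v != set0) && (outk k v \subset B)].

Definition Vk (k : K) : {set cnode} :=
  [set c : cnode | match c.2 with
                   | Some B => [&& c.1 \in Nk I k, B \in P c.1 & k \in Kpart c.1 B]
                   | None => c.1 == dest I k
                   end].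

Definition Eall : {set cnode * cnode} :=
  [set e : cnode * cnode | match e.1.2 with
                           | Some B => [&& B \in P e.1.1, (e.1.1, e.2.1) \in B & e.2 \in Vall]
                           | None => false
                           end].

Definition Ek (k : K) : {set cnode * cnode} :=
  [set e in Eall | [&& (e.1.1, e.2.1) \in Ak I k, e.1 \in Vk k & e.2 \in Vk k]].

Definition tauG (c c' : cnode) : nat := tau I c.1 c'.1.

Definition tarcG := tarc cnode T.
Definition tnodeG := tnode cnode T.

Definition ET : {set tarcG} := movarcs T tauG Eall.
Definition EkT (k : K) : {set tarcG} := movarcs T tauG (Ek k).
Definition FkT (k : K) : {set tarcG} := holdarcs T (Vk k).
Definition arcsGkT (k : K) : {set tarcG} := EkT k :|: FkT k.
Definition VkT (k : K) : {set tnodeG} := tnodes T (Vk k).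

(* o'_k : the unique copy of o_k in V^k *)
Definition origG (k : K) : cnode := odflt (orig I k, None) [pick c in Vk k | c.1 == orig I k].

Definition ETof (a : tarcN) : {set tarcG} :=
  [set e : tarcG | [&& e.1.1.1 == a.1.1, e.2.1.1 == a.2.1,
                      e.1.2 == a.1.2, e.2.2 == a.2.2 & (e.1.1, e.2.1) \in Eall]].

Definition solG := ({ffun tarcN -> nat} * {ffun K * tarcG -> bool})%type.

Definition feasG (s : solG) : Prop :=
  let y := s.1 in let x := s.2 in
  [/\ (forall a, a \notin AT -> y a = 0%N),
      (forall k e, e \notin arcsGkT k -> x (k, e) = false),
      (forall k p, p \in VkT k ->
         ((\sum_(e in outarcs (arcsGkT k) p) (x (k, e) : nat))%:Z
          - (\sum_(e in inarcs (arcsGkT k) p) (x (k, e) : nat))%:Z)%R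
         = ((is_tnode p (origG k) (rel I k))%:Z
            - (is_tnode p (dest I k, None) (ddl I k))%:Z)%R)
    & (forall a, a \in AT ->
         (\sum_(k : K) \sum_(e in ETof a) dem I k * (x (k, e) : nat)%:R
            <= (cap I a.1.1 a.2.1 * y a)%:R)%R)].

Definition objG (s : solG) : R :=
  ((\sum_(a in AT) fc I a.1.1 a.2.1 * (s.1 a)%:R)
   + \sum_(k : K) \sum_(e in ET) uc I k e.1.1.1 e.2.1.1 * dem I k * (s.2 (k, e) : nat)%:R)%R.

Definition nvarsG : nat := (#|AT| + \sum_(k : K) #|arcsGkT k|)%N.
Definition nconsG : nat := (\sum_(k : K) #|VkT k| + #|AT|)%N.

End SND.

From Pilot Require Import Defs.
From HB Require Import structures.
From mathcomp Require Import all_boot all_order all_algebra.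
Set Implicit Arguments. Unset Strict Implicit. Unset Printing Implicit Defensive.
Import GRing.Theory.

(** Because the partition is valid, each node [v] of [D^k] has exactly one
    copy in [V^k]: the terminal copy if [v = d_k], and otherwise the copy of
    the part of [A_v] containing [δ^+_{D^k}(v)].  Forgetting the copy index is
    therefore a bijection from the timed nodes and arcs of [G^k_T] onto those
    of [D^k_T], compatible with endpoints, times, [o_k], [d_k], the movement
    arcs and the families [E_T(a)].  Transporting the flow variables [x^k]
    along it and keeping [y] unchanged maps solutions to solutions and
    preserves both the cost and the sizes of the programs. *)

Lemma in_outarcs (X : finType) (Tm : nat) (B : {set tarc X Tm}) p e :
  (e \in outarcs B p) = (e \in B) && (e.1 == p).
Proof. by rewrite inE. Qed.

Lemma in_inarcs (X : finType) (Tm : nat) (B : {set tarc X Tm}) p e :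
  (e \in inarcs B p) = (e \in B) && (e.2 == p).
Proof. by rewrite inE. Qed.

Section AuxiliaryNetwork.
Variables (R : realFieldType) (N K : finType) (I : instance R N K)
  (P : N -> {set {set N * N}}).
Hypothesis vP : valid_partition I P.

Local Notation T := (horizon I).
Local Notation Vk := (Vk I P).
Local Notation arcsGkT := (arcsGkT I P).

Lemma in_Ek k c c' : ((c, c') \in Ek I P k) =
  [&& (c, c') \in Eall P, (c.1, c'.1) \in Ak I k, c \in Vk k & c' \in Vk k].
Proof. by rewrite !inE. Qed.

Lemma in_arcsGkT k c c' (t t' : 'I_T.+1) : (((c, t), (c', t')) \in arcsGkT k) =
  ((c, c') \in Ek I P k) && (t + tau I c.1 c'.1 == t')%N
  || [&& c \in Vk k, c' == c & (t.+1 == t')%N].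
Proof. by rewrite !inE. Qed.

Lemma in_arcsDkT k v w (t t' : 'I_T.+1) : (((v, t), (w, t')) \in arcsDkT I k) =
  ((v, w) \in Ak I k) && (t + tau I v w == t')%N
  || [&& v \in Nk I k, w == v & (t.+1 == t')%N].
Proof. by rewrite !inE. Qed.

Lemma in_VkT k (p : tnodeG I) : (p \in VkT I P k) = (p.1 \in Vk k).
Proof. by rewrite in_set. Qed.

Lemma in_NkT k (q : tnodeN I) : (q \in NkT I k) = (q.1 \in Nk I k).
Proof. by rewrite in_set. Qed.

(** Junk (but still a copy of [v]) when [v] is not a node of [D^k]. *)
Definition copy (k : K) (v : N) : cnode N :=
  if v == dest I k then (v, None) else (v, [pick B in P v | outk I k v \subset B]).

Lemma copy_fst k v : (copy k v).1 = v.
Proof. by rewrite /copy; case: ifP. Qed.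

Lemma Vk_fst k c : c \in Vk k -> c.1 \in Nk I k.
Proof.
rewrite inE; case: c => v [B|] /=; first by case/and3P.
by move/eqP->; exact: dest_in.
Qed.

Lemma copy_Vk k v : v \in Nk I k -> copy k v \in Vk k.
Proof.
move=> vNk; rewrite /copy; case: ifP => [/eqP->|vd]; first by rewrite inE /=.
have outk_v := other_out vNk (negbT vd).
have [B BP sB] := (vP v).2 k outk_v.
case: pickP => [B' /andP[B'P sB']|/(_ B)]; last by rewrite BP sB.
by rewrite inE /= vNk B'P inE outk_v sB'.
Qed.

Lemma Vk_copy k c : c \in Vk k -> copy k c.1 = c.
Proof.
rewrite inE; case: c => v [B|] /=; last by move/eqP=> ->; rewrite /copy eqxx.
case/and3P=> _ BP; rewrite inE => /andP[outk_v sB].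
have vd : v != dest I k.
  by apply: contraNneq outk_v => ->; rewrite /outk dest_out.
rewrite /copy (negbTE vd).
case: pickP => [B' /andP[B'P sB']|/(_ B)]; last by rewrite BP sB.
have [a a_out] := set0Pn _ outk_v.
have triv : trivIset (P v) by case/and3P: (vP v).1.
rewrite -(def_pblock triv BP (subsetP sB _ a_out)).
by rewrite (def_pblock triv B'P (subsetP sB' _ a_out)).
Qed.

Lemma eq_Vk k c c' : c \in Vk k -> c' \in Vk k -> (c == c') = (c.1 == c'.1).
Proof.
move=> cV c'V; apply/eqP/eqP => [->//|e].
by rewrite -(Vk_copy cV) -(Vk_copy c'V) e.
Qed.

Lemma copy_part k v : v \in Nk I k -> v != dest I k ->
  exists2 B, copy k v = (v, Some B) & (B \in P v) && (outk I k v \subset B).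
Proof.
move=> vNk vd; have := copy_Vk vNk; have := copy_fst k v.
case: (copy k v) => v' [B|] /= ->; rewrite inE /=; last by rewrite (negbTE vd).
by case/and3P=> _ BP; rewrite inE => /andP[_ sB]; exists B; rewrite ?BP.
Qed.

Lemma Vk_Vall k c : c \in Vk k -> c \in Vall P.
Proof. by rewrite !inE; case: c => v [B|] //= /and3P[]. Qed.

Lemma Ak_Ek k v w : (v, w) \in Ak I k -> (copy k v, copy k w) \in Ek I P k.
Proof.
move=> vw; have /andP[vNk wNk] : (v \in Nk I k) && (w \in Nk I k) := Ak_ends vw.
have vd : v != dest I k.
  apply: contraTneq vw => ->; have /setP/(_ (dest I k, w)) := dest_out I k.
  by rewrite !inE eqxx andbT => ->.
have [B cvB /andP[BP sB]] := copy_part vNk vd.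
rewrite in_Ek !copy_fst vw !copy_Vk // !andbT in_set cvB /= BP copy_fst.
by rewrite (subsetP sB) ?(Vk_Vall (copy_Vk wNk)) // !inE vw eqxx.
Qed.

Lemma Eall_arcs c c' : (c, c') \in Eall P -> (c.1, c'.1) \in arcs I.
Proof.
rewrite inE; case: c => v [B|] //= /and3P[BP vB _].
case/and3P: (vP v).1 => /eqP cover_v _ _.
have : (v, c'.1) \in cover (P v) by apply/bigcupP; exists B.
by rewrite cover_v inE => /andP[].
Qed.

Definition proj_node (p : tnodeG I) : tnodeN I := (p.1.1, p.2).
Definition lift_node k (q : tnodeN I) : tnodeG I := (copy k q.1, q.2).
Definition proj_arc (e : tarcG I) : tarcN I := (proj_node e.1, proj_node e.2).
Definition lift_arc k (a : tarcN I) : tarcG I := (lift_node k a.1, lift_node k a.2).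

Lemma lift_nodeK k : cancel (lift_node k) proj_node.
Proof. by case=> v t; rewrite /proj_node copy_fst. Qed.

Lemma lift_arcK k : cancel (lift_arc k) proj_arc.
Proof. by case=> p q; rewrite /proj_arc !lift_nodeK. Qed.

Lemma arcsGkT_ends k e : e \in arcsGkT k -> (e.1.1 \in Vk k) && (e.2.1 \in Vk k).
Proof.
case: e => [[c t] [c' t']]; rewrite in_arcsGkT /= => /orP[/andP[]|/and3P[cV /eqP-> _]].
  by rewrite in_Ek => /and4P[_ _ -> ->].
by rewrite cV.
Qed.

Lemma proj_arcK k : {in arcsGkT k, cancel proj_arc (lift_arc k)}.
Proof.
move=> [[c t] [c' t']] /arcsGkT_ends /andP[cV c'V].
by rewrite /lift_arc /lift_node /= !Vk_copy.
Qed.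

Lemma proj_arc_inj k : {in arcsGkT k &, injective proj_arc}.
Proof. exact: can_in_inj (@proj_arcK k). Qed.

Lemma proj_arcsGkT k e : e \in arcsGkT k -> proj_arc e \in arcsDkT I k.
Proof.
case: e => [[c t] [c' t']].
rewrite in_arcsGkT /proj_arc /proj_node in_arcsDkT /= => /orP[/andP[]|/and3P[cV /eqP-> ->]].
  by rewrite in_Ek => /and4P[_ -> _ _] ->.
by rewrite (Vk_fst cV) eqxx orbT.
Qed.

Lemma lift_arcsDkT k a : a \in arcsDkT I k -> lift_arc k a \in arcsGkT k.
Proof.
case: a => [[v t] [w t']]; rewrite in_arcsDkT /lift_arc /lift_node in_arcsGkT /= !copy_fst.
case/orP=> [/andP[vw ->]|/and3P[vNk /eqP-> ->]]; first by rewrite (Ak_Ek vw).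
by rewrite copy_Vk // eqxx orbT.
Qed.

Lemma arcsDkT_proj k : arcsDkT I k = proj_arc @: arcsGkT k.
Proof.
apply/setP=> a; apply/idP/imsetP => [aD|[e eG ->]]; last exact: proj_arcsGkT.
by exists (lift_arc k a); rewrite ?lift_arcsDkT ?lift_arcK.
Qed.

Lemma NkT_proj k : NkT I k = proj_node @: VkT I P k.
Proof.
apply/setP=> q; apply/idP/imsetP => [qN|[p pV ->]].
  by exists (lift_node k q); rewrite ?lift_nodeK // in_VkT copy_Vk // -in_NkT.
by rewrite in_NkT Vk_fst // -in_VkT.
Qed.

Lemma card_arcsGkT k : #|arcsGkT k| = #|arcsDkT I k|.
Proof. by rewrite arcsDkT_proj card_in_imset //; exact: (@proj_arc_inj k). Qed.

Lemma card_VkT k : #|VkT I P k| = #|NkT I k|.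
Proof.
rewrite NkT_proj card_in_imset // => -[c t] [c' t']; rewrite !in_VkT => cV c'V.
by case=> cc' ->; congr (_, _); apply/eqP; rewrite (eq_Vk cV c'V) cc'.
Qed.

Lemma big_arcsGkT (T0 : Type) (idx : T0) (op : Monoid.com_law idx) k
    (S : {set tarcG I}) (S' : {set tarcN I}) (F : tarcN I -> T0) :
  {in arcsGkT k, forall e, (e \in S) = (proj_arc e \in S')} ->
  \big[op/idx]_(e in S :&: arcsGkT k) F (proj_arc e) =
  \big[op/idx]_(a in S' :&: arcsDkT I k) F a.
Proof.
move=> S_S'; have -> : S' :&: arcsDkT I k = proj_arc @: (S :&: arcsGkT k).
  apply/setP=> a; rewrite arcsDkT_proj; apply/setIP/imsetP => [[aS' /imsetP[e eG ae]]|].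
    by exists e => //; rewrite in_setI eG andbT S_S' // -ae.
  by case=> e /setIP[eS eG] ->; rewrite -S_S' // imset_f.
rewrite big_imset // => e e' /setIP[_ eG] /setIP[_ e'G]; exact: (proj_arc_inj eG e'G).
Qed.

Definition lift_flow (x : {ffun K * tarcN I -> bool}) : {ffun K * tarcG I -> bool} :=
  [ffun ke => (ke.2 \in arcsGkT ke.1) && x (ke.1, proj_arc ke.2)].

Definition proj_flow (x : {ffun K * tarcG I -> bool}) : {ffun K * tarcN I -> bool} :=
  [ffun ka => (ka.2 \in arcsDkT I ka.1) && x (ka.1, lift_arc ka.1 ka.2)].

Definition supported_DkT (x : {ffun K * tarcN I -> bool}) : Prop :=
  forall k a, a \notin arcsDkT I k -> x (k, a) = false.

Lemma proj_flow_supported x : supported_DkT (proj_flow x).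
Proof. by move=> k a aD; rewrite ffunE (negbTE aD). Qed.

Lemma lift_flowK x : supported_DkT x -> proj_flow (lift_flow x) = x.
Proof.
move=> sx; apply/ffunP=> -[k a]; rewrite !ffunE /=.
case aD: (a \in arcsDkT I k); last by rewrite (sx k a) ?aD.
by rewrite lift_arcsDkT // lift_arcK.
Qed.

Lemma proj_flowK (x : {ffun K * tarcG I -> bool}) :
  (forall k e, e \notin arcsGkT k -> x (k, e) = false) ->
  lift_flow (proj_flow x) = x.
Proof.
move=> sx; apply/ffunP=> -[k e]; rewrite !ffunE /=.
case eG: (e \in arcsGkT k); last by rewrite (sx k e) ?eG.
by rewrite proj_arcsGkT // proj_arcK.
Qed.

Lemma demand_lift_node k p : p.1 \in Vk k ->
  is_tnode p (origG I P k) (Defs.rel I k) = is_tnode (proj_node p) (orig I k) (Defs.rel I k) /\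
  is_tnode p (dest I k, None) (ddl I k) = is_tnode (proj_node p) (dest I k) (ddl I k).
Proof.
move=> pV; have destV : (dest I k, None) \in Vk k by rewrite inE /=.
have [oV /eqP o1] : (origG I P k \in Vk k) /\ ((origG I P k).1 == orig I k).
  apply/andP; rewrite /origG; case: pickP => [c /andP[-> ->] //|/(_ (copy k (orig I k)))].
  by rewrite copy_Vk ?orig_in // copy_fst eqxx.
by rewrite /is_tnode (eq_Vk pV oV) (eq_Vk pV destV) o1.
Qed.

Section LiftedFlow.
Variables (x : {ffun K * tarcN I -> bool}) (k : K).
Hypothesis sx : supported_DkT x.

Lemma big_lift_flow (T0 : Type) (idx : T0) (op : Monoid.com_law idx)
    (S : {set tarcG I}) (S' : {set tarcN I}) (F : tarcN I -> bool -> T0) :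
  (forall a, F a false = idx) ->
  {in arcsGkT k, forall e, (e \in S) = (proj_arc e \in S')} ->
  \big[op/idx]_(e in S) F (proj_arc e) (lift_flow x (k, e)) =
  \big[op/idx]_(a in S') F a (x (k, a)).
Proof.
move=> F0 S_S'.
rewrite (big_setID (arcsGkT k)) [X in op _ X]big1 ?Monoid.mulm1; last first.
  by move=> e /setDP[_ /negbTE eG]; rewrite ffunE /= eG F0.
rewrite [RHS](big_setID (arcsDkT I k)) [X in op _ X]big1 ?Monoid.mulm1; last first.
  by move=> a /setDP[_ aD]; rewrite sx.
rewrite -(big_arcsGkT op (fun a => F a (x (k, a))) S_S').
by apply: eq_bigr => e /setIP[_ eG]; rewrite ffunE /= eG.
Qed.

Lemma out_lift_flow p : p.1 \in Vk k ->
  (\sum_(e in outarcs (arcsGkT k) p) lift_flow x (k, e) =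
   \sum_(a in outarcs (arcsDkT I k) (proj_node p)) x (k, a))%N.
Proof.
move=> pV; apply: (big_lift_flow (F := fun _ b => nat_of_bool b) addn) => // e eG.
have /andP[e1V _] := arcsGkT_ends eG.
rewrite !in_outarcs eG proj_arcsGkT //=.
by rewrite /proj_node !xpair_eqE -(eq_Vk e1V pV) -xpair_eqE -!surjective_pairing.
Qed.

Lemma in_lift_flow p : p.1 \in Vk k ->
  (\sum_(e in inarcs (arcsGkT k) p) lift_flow x (k, e) =
   \sum_(a in inarcs (arcsDkT I k) (proj_node p)) x (k, a))%N.
Proof.
move=> pV; apply: (big_lift_flow (F := fun _ b => nat_of_bool b) addn) => // e eG.
have /andP[_ e2V] := arcsGkT_ends eG.
rewrite !in_inarcs eG proj_arcsGkT //=.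
by rewrite /proj_node !xpair_eqE -(eq_Vk e2V pV) -xpair_eqE -!surjective_pairing.
Qed.

(** For holdover arcs both sides are false, as [D] has no loops. *)
Lemma Eall_arcsGkT e : e \in arcsGkT k ->
  ((e.1.1, e.2.1) \in Eall P) = (((proj_arc e).1.1, (proj_arc e).2.1) \in arcs I).
Proof.
case: e => [[c t] [c' t']]; rewrite in_arcsGkT /= => /orP[/andP[]|/and3P[_ /eqP-> _]].
  by rewrite in_Ek => /and4P[cc' _ _ _] _; rewrite cc' (Eall_arcs cc').
by apply/idP/idP => [/Eall_arcs //|/no_loop]; rewrite eqxx.
Qed.

Lemma capacity_lift_flow a : a \in AT I ->
  (\sum_(e in ETof P a) dem I k * (lift_flow x (k, e) : nat)%:R =
   dem I k * (x (k, a) : nat)%:R)%R.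
Proof.
move=> aAT.
transitivity (\sum_(b in [set a]) dem I k * (x (k, b) : nat)%:R)%R; last by rewrite big_set1.
apply: (big_lift_flow (F := fun _ b => (dem I k * (b : nat)%:R)%R) +%R) => [_|e eG].
  by rewrite mulr0.
rewrite inE in_set1 Eall_arcsGkT //.
case: a aAT => [[v t] [w t']]; rewrite inE /= => /andP[vw _].
rewrite /proj_arc /proj_node !xpair_eqE -!andbA.
by case: (e.1.1.1 =P v) => // ->; case: (e.2.1.1 =P w) => [->|_]; rewrite ?vw ?andbT ?andbF.
Qed.

Lemma cost_lift_flow :
  (\sum_(e in ET I P) uc I k e.1.1.1 e.2.1.1 * dem I k * (lift_flow x (k, e) : nat)%:R =
   \sum_(a in AT I) uc I k a.1.1 a.2.1 * dem I k * (x (k, a) : nat)%:R)%R.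
Proof.
apply: (big_lift_flow (F := fun a b => (uc I k a.1.1 a.2.1 * dem I k * (b : nat)%:R)%R) +%R).
  by move=> a; rewrite mulr0.
by move=> e eG; rewrite in_set [RHS]in_set Eall_arcsGkT.
Qed.

End LiftedFlow.

Lemma feas_lift_flow y x : supported_DkT x -> feasD (y, x) <-> feasG P (y, lift_flow x).
Proof.
move=> sx; have flow_eq k p (pV : p.1 \in Vk k) :=
  (out_lift_flow sx pV, in_lift_flow sx pV, demand_lift_node pV).
split=> -[y_supp x_supp conserve cap_ok]; split=> //.
- by move=> k e eG; rewrite ffunE /= (negbTE eG).
- move=> k p; rewrite in_VkT => pV; have [[-> ->] [-> ->]] := flow_eq k p pV.
  by apply: conserve; rewrite in_NkT Vk_fst.
- by move=> a aAT; under eq_bigr do rewrite capacity_lift_flow //; exact: cap_ok.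
- move=> k q; rewrite in_NkT => qN; have pV : (lift_node k q).1 \in Vk k := copy_Vk qN.
  have := conserve k (lift_node k q); rewrite in_VkT => /(_ pV).
  by have [[-> ->] [-> ->]] := flow_eq k _ pV; rewrite lift_nodeK.
- by move=> a aAT; have := cap_ok a aAT; under eq_bigr do rewrite capacity_lift_flow //.
Qed.

Lemma obj_lift_flow y x : supported_DkT x -> objG P (y, lift_flow x) = objD (y, x).
Proof.
move=> sx; rewrite /objD /objG /=; congr (_ + _)%R.
by rewrite [RHS]exchange_big; apply: eq_bigr => k _; rewrite cost_lift_flow.
Qed.

End AuxiliaryNetwork.

Theorem theorem2 (R : realFieldType) (N K : finType) (I : instance R N K)
    (P : N -> {set {set N * N}}) :
  valid_partition I P ->
  [/\ nvarsD I = nvarsG I P,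
      nconsD I = nconsG I P &
      exists (phi : solD I -> solG I) (psi : solG I -> solD I),
        (forall s : solD I, @feasD _ _ _ I s ->
           [/\ @feasG _ _ _ I P (phi s), psi (phi s) = s
             & @objG _ _ _ I P (phi s) = @objD _ _ _ I s]) /\
        (forall s' : solG I, @feasG _ _ _ I P s' ->
           @feasD _ _ _ I (psi s') /\ phi (psi s') = s')].
Proof.
move=> vP; split.
- by congr (_ + _)%N; apply: eq_bigr => k _; rewrite card_arcsGkT.
- by congr (_ + _)%N; apply: eq_bigr => k _; rewrite card_VkT.
exists (fun s => (s.1, lift_flow P s.2)), (fun s' => (s'.1, proj_flow P s'.2)).
split=> [[y x] feas_x | [y x'] feas_x'].
- have sx : supported_DkT x by case: feas_x.
  split=> /=; first exact/(feas_lift_flow vP y sx).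
    by rewrite lift_flowK.
  exact: obj_lift_flow.
- have ex' : lift_flow P (proj_flow P x') = x' by apply: proj_flowK; case: feas_x'.
  split=> /=; last by rewrite ex'.
  by apply/(feas_lift_flow vP y (proj_flow_supported P x')); rewrite ex'.
Qed.
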